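(* The Collatz conjecture (for every $n\in\mathbb{N}$ there exists $k\in\mathbb{N}_0$ with $T^{(k)}(n)=1$) holds if and only if every natural number $n\notin\{1,2,4\}$ can be represented in the form $n=\frac{2^m}{3^l}-\sum_{k=1}^{l}\frac{2^{b_k}}{3^k}$ for some $m,l,b_1,\dots,b_l\in\mathbb{N}_0$ with $0\leq l\leq m-3$ and $0\leq b_1<b_2<\cdots<b_l\leq m-4$.
   Context: $\mathbb{N}=\{1,2,3,\dots\}$, $\mathbb{N}_0=\mathbb{N}\cup\{0\}$. The Collatz map $T:\mathbb{N}\to\mathbb{N}$ is $T(n)=\frac{3n+1}{2}$ if $n$ is odd and $T(n)=\frac{n}{2}$ if $n$ is even; $T^{(k)}$ denotes the $k$-fold composition ($T^{(0)}$ the identity). For $l=0$ the sum is empty. *)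

From mathcomp Require Import all_boot all_order all_algebra.
Set Implicit Arguments. Unset Strict Implicit. Unset Printing Implicit Defensive.

Definition T (n : nat) : nat := if odd n then (3 * n + 1)./2 else n./2.

From mathcomp Require Import all_boot all_order all_algebra zify ring.
Import GRing.Theory Num.Theory.

Set Implicit Arguments.
Unset Strict Implicit.
Unset Printing Implicit Defensive.

(* Multiplying the representation by [3^l] turns it into the identity
   [n 3^l + \sum_k 2^(b_k) 3^(l-k) = 2^m] between naturals.  An even step
   [n = 2j] corresponds to adding 1 to [m] and to every [b_k]; an odd step
   [n = 2j+1], [T n = 3j+2] corresponds to adding 1 to [m] and [l] and
   prepending the exponent [b_1 = 0].  Running the trajectory of [n] backwards
   from [8 = 2^3] builds a representation; conversely, the parity of [n] and
   whether [b_1 = 0] tell which step to undo, and each undone step decreases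
   [m] or [l] until [n = 1]. *)

Definition reaches_one (n : nat) : Prop := exists k, iter k T n = 1.

Lemma reaches_one_of_T n : reaches_one (T n) -> reaches_one n.
Proof. by case=> k hk; exists k.+1; rewrite iterSr. Qed.

Lemma reaches_one_T n : n != 1 -> reaches_one n -> reaches_one (T n).
Proof.
move=> n1 [[|k] /= hk]; first by rewrite hk in n1.
by exists k; rewrite -iterSr.
Qed.

Lemma T_odd n : odd n -> T (3 * n + 1) = T n.
Proof. by move=> hn; rewrite /T oddD oddM hn. Qed.

Definition increasing_on (l : nat) (b : nat -> nat) : Prop :=
  forall k, 1 <= k < l -> b k < b k.+1.

Lemma increasing_on_ge l b : increasing_on l b ->
  forall k, 1 <= k <= l -> b 1 + k.-1 <= b k.
Proof.
move=> hb; elim=> [|[|k] IH] hk; try lia.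
by have := hb k.+1; have := IH; lia.
Qed.

Definition pow23_sum (l : nat) (b : nat -> nat) : nat :=
  \sum_(1 <= k < l.+1) 2 ^ b k * 3 ^ (l - k).

Lemma pow23_sum0 b : pow23_sum 0 b = 0.
Proof. by rewrite /pow23_sum big_geq. Qed.

Lemma pow23_sumS l b :
  pow23_sum l.+1 b = 2 ^ b 1 * 3 ^ l + pow23_sum l (fun k => b k.+1).
Proof. by rewrite /pow23_sum big_nat_recl // subn1. Qed.

Lemma pow23_sum_succ l b : pow23_sum l (fun k => (b k).+1) = 2 * pow23_sum l b.
Proof.
by rewrite /pow23_sum big_distrr; apply: eq_big_nat => k _; rewrite /= expnS mulnA.
Qed.

Lemma pow23_sum_pred l b : (forall k, 1 <= k <= l -> 0 < b k) ->
  pow23_sum l b = 2 * pow23_sum l (fun k => (b k).-1).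
Proof.
move=> hb; rewrite -pow23_sum_succ; apply: eq_big_nat => k /andP[k1 kl].
by rewrite prednK // hb ?k1.
Qed.

Lemma pow23_sum_even l b : (forall k, 1 <= k <= l -> 0 < b k) ->
  ~~ odd (pow23_sum l b).
Proof. by move/pow23_sum_pred ->; rewrite oddM. Qed.

Definition admissible (m l : nat) (b : nat -> nat) : Prop :=
  [/\ l + 3 <= m, increasing_on l b & (0 < l -> b l + 4 <= m)].

Definition prepend0 (b : nat -> nat) (k : nat) : nat :=
  if k <= 1 then 0 else (b k.-1).+1.

Lemma pow23_sum_prepend0 l b :
  pow23_sum l.+1 (prepend0 b) = 3 ^ l + 2 * pow23_sum l b.
Proof.
rewrite pow23_sumS mul1n -pow23_sum_succ.
by congr (_ + _); apply: eq_big_nat => -[|k].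
Qed.

Lemma admissible_succ m l b :
  admissible m l b -> admissible m.+1 l (fun k => (b k).+1).
Proof. by case=> lm hb hbl; split=> [|k /hb|/hbl]; lia. Qed.

Lemma admissible_prepend0 m l b :
  admissible m l b -> admissible m.+1 l.+1 (prepend0 b).
Proof.
rewrite /prepend0; case=> lm hb hbl; split=> [|k|_] /=; first lia.
  by case: k => [|[|k]] //= hk; have := hb k.+1; lia.
by case: l {hb} lm hbl => [|l] /= lm; [lia | move/(_ isT); lia].
Qed.

Lemma representation_of_reaches_one n : 0 < n -> reaches_one n ->
  n \notin [:: 1; 2; 4] ->
  exists m l b, admissible m l b /\ n * 3 ^ l + pow23_sum l b = 2 ^ m.
Proof.
move=> + [k]; elim: k n => [|k IH] n n0; first by move=> /= ->.
rewrite iterSr => hk n124; have n2 := odd_double_half n.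
case hn: (odd n) n2 => /= n2.
- have j0 : 0 < n./2 by move: n124; rewrite !inE -n2; lia.
  have Tn : T n = 3 * n./2 + 2 by rewrite /T hn -n2; lia.
  have Tn0 : 0 < T n by lia.
  have Tn124 : T n \notin [:: 1; 2; 4] by rewrite Tn !inE; lia.
  have [m [l [b [hb e]]]] := IH (T n) Tn0 hk Tn124.
  exists m.+1, l.+1, (prepend0 b); split; first exact: admissible_prepend0.
  by rewrite pow23_sum_prepend0 -n2 -mul2n !expnS -e Tn; ring.
- have Tn : T n = n./2 by rewrite /T hn.
  case: (boolP (n./2 \in [:: 1; 2; 4])) => j124.
    (* then [n = 8 = 2^3] *)
    exists 3, 0, id; split; first by split=> //; lia.
    by move: j124 n124; rewrite pow23_sum0 !inE -n2; lia.
  have Tn0 : 0 < T n by lia.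
  rewrite -Tn in j124; have [m [l [b [hb e]]]] := IH (T n) Tn0 hk j124.
  exists m.+1, l, (fun k => (b k).+1); split; first exact: admissible_succ.
  by rewrite pow23_sum_succ -n2 -mul2n expnS -e Tn; ring.
Qed.

Lemma representation_even_step n m l b :
  (forall k, 1 <= k <= l -> 0 < b k) ->
  n * 3 ^ l + pow23_sum l b = 2 ^ m.+1 ->
  ~~ odd n /\ n./2 * 3 ^ l + pow23_sum l (fun k => (b k).-1) = 2 ^ m.
Proof.
move=> hb e; have hodd : ~~ odd n.
  have := congr1 odd e; rewrite oddD oddM !oddX /= orbT andbT.
  by rewrite (negPf (pow23_sum_even hb)) addbF => ->.
have n2 := odd_double_half n; rewrite (negPf hodd) /= in n2.
split=> //; move: e; rewrite (pow23_sum_pred hb) expnS -{1}n2 -mul2n.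
set s := pow23_sum _ _; set t := 3 ^ l; nia.
Qed.

Lemma representation_odd_step n m l b : b 1 = 0 -> increasing_on l.+1 b ->
  n * 3 ^ l.+1 + pow23_sum l.+1 b = 2 ^ m.+1 ->
  odd n /\ (3 * n + 1) * 3 ^ l + pow23_sum l (fun k => b k.+1) = 2 ^ m.+1.
Proof.
move=> b1 hb; rewrite pow23_sumS b1 mul1n.
have -> : n * 3 ^ l.+1 + (3 ^ l + pow23_sum l (fun k => b k.+1))
        = (3 * n + 1) * 3 ^ l + pow23_sum l (fun k => b k.+1) by rewrite expnS; ring.
move=> e; split=> //.
have hpos k : 1 <= k <= l -> 0 < b k.+1.
  by move=> /andP[k1 kl]; have := increasing_on_ge hb (k := k.+1); lia.
have := congr1 odd e; rewrite oddD oddM !oddX oddD oddM /= orbT andbT.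
by rewrite (negPf (pow23_sum_even hpos)) addbF; case: (odd n).
Qed.

Lemma reaches_one_of_representation m l b n : 0 < n ->
  increasing_on l b -> n * 3 ^ l + pow23_sum l b = 2 ^ m -> reaches_one n.
Proof.
elim: m l b n => [|m IHm] l b n n0 hb e.
  have := expn_gt0 3 l; move: e; rewrite expn0 => e l3.
  by exists 0 => /=; nia.
have even_case l' b' n' : 0 < n' -> increasing_on l' b' ->
    (forall k, 1 <= k <= l' -> 0 < b' k) ->
    n' * 3 ^ l' + pow23_sum l' b' = 2 ^ m.+1 -> reaches_one n'.
  move=> n'0 hb' hpos e'; have [hodd e2] := representation_even_step hpos e'.
  have n2 := odd_double_half n'; rewrite (negPf hodd) /= in n2.
  apply: reaches_one_of_T; rewrite /T (negPf hodd).
  apply: (IHm _ _ _ _ _ e2); first lia.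
  by move=> k hk; have := hb' k hk; have := hpos k; have := hpos k.+1; lia.
elim: l b n n0 hb e => [|l IHl] b n n0 hb e.
  by apply: (even_case _ _ _ n0 hb _ e) => k; lia.
case: (posnP (b 1)) => b1; last first.
  by apply: (even_case _ _ _ n0 hb _ e) => k hk; have := increasing_on_ge hb hk; lia.
have [hodd e'] := representation_odd_step b1 hb e.
have h3n1 : reaches_one (3 * n + 1).
  by apply: (IHl _ _ _ _ e'); [lia | move=> k /andP[k1 kl]; apply: hb; lia].
have n3n1 : 3 * n + 1 != 1 by lia.
by apply: reaches_one_of_T; rewrite -T_odd //; apply: reaches_one_T.
Qed.

Lemma pow23_sum_ratE l b : ((pow23_sum l b)%:R : rat) =
  ((\sum_(1 <= k < l.+1) 2%:R ^+ b k / 3%:R ^+ k) * 3%:R ^+ l)%R.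
Proof.
rewrite /pow23_sum natr_sum mulr_suml; apply: eq_big_nat => k /andP[_].
rewrite ltnS => kl; rewrite natrM !natrX -[in RHS](subnK kl) exprD.
have : ((3%:R : rat) ^+ k != 0)%R by rewrite expf_eq0 pnatr_eq0 andbF.
by move=> h3; field.
Qed.

Lemma representation_ratE n m l b :
  (n%:R : rat) = (2%:R ^+ m / 3%:R ^+ l
                  - \sum_(1 <= k < l.+1) 2%:R ^+ (b k) / 3%:R ^+ k)%R <->
  n * 3 ^ l + pow23_sum l b = 2 ^ m.
Proof.
have h3 : ((3%:R : rat) ^+ l != 0)%R by rewrite expf_eq0 pnatr_eq0 andbF.
split=> e.
  apply/eqP; rewrite -(eqr_nat rat) natrD natrM !natrX pow23_sum_ratE e.
  by apply/eqP; field.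
have := congr1 (fun x => x%:R : rat) e; rewrite /= natrD natrM !natrX pow23_sum_ratE.
by move=> e'; apply: (mulIf h3); rewrite mulrBl -e'; field.
Qed.

Theorem mainTheorem4 :
  (forall n : nat, 0 < n -> exists k : nat, iter k T n = 1)
  <->
  (forall n : nat, 0 < n -> n \notin [:: 1; 2; 4] ->
     exists (m l : nat) (b : nat -> nat),
       [/\ l + 3 <= m,
           (forall k, 1 <= k < l -> b k < b k.+1),
           (0 < l -> b l + 4 <= m) &
           (n%:R : rat) = (2%:R ^+ m / 3%:R ^+ l
                           - \sum_(1 <= k < l.+1) 2%:R ^+ (b k) / 3%:R ^+ k)%R]).
Proof.
split=> [collatz n n0 n124 | hrep n n0].
  have [m [l [b [[lm hb hbl] e]]]] :=
    representation_of_reaches_one n0 (collatz n n0) n124.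
  by exists m, l, b; split=> //; apply/representation_ratE.
case: (boolP (n \in [:: 1; 2; 4])).
  by rewrite !inE => /or3P[] /eqP ->; [exists 0 | exists 1 | exists 2].
move=> /(hrep n n0) [m [l [b [_ hb _ /representation_ratE e]]]].
exact: (reaches_one_of_representation n0 hb e).
Qed.
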